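(* The space $\mathtt{CA}$ with the pointwise topology has the following properties: (1) it is countable; (2) it is Hausdorff; (3) it is not compact; (4) it is perfect (has no isolated points); (5) it is totally disconnected; (6) it is of first category; (7) no point has a countable neighborhood basis (so the space is not first-countable, hence neither metrizable nor second-countable); (8) it is normal; (9) it is not sequential.
   Context: $\Sigma$ is a finite alphabet with $|\Sigma|\ge 2$, and $\Sigma^\mathbb{Z}$ carries the product (Cantor) topology. The shift $\sigma$ is $\sigma(x)_i=x_{i+1}$. A cellular automaton (CA) is a continuous map $c:\Sigma^\mathbb{Z}\to\Sigma^\mathbb{Z}$ with $c\circ\sigma=\sigma\circ c$; $\mathtt{CA}$ is the set of all CA. The pointwise topology on $\mathtt{CA}$ is generated by the subbase $U_x(a)=\{c\in\mathtt{CA}\mid c(x)_0=a\}$, $x\in\Sigma^\mathbb{Z}$, $a\in\Sigma$. A space is sequential if its sequentially closed subsets (those containing the limits of all their convergent sequences) are exactly its closed subsets; it is of first category if it is a countable union of nowhere dense sets. *)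

From HB Require Import structures.
From mathcomp Require Import all_boot all_order all_algebra.
From Stdlib Require Import List.
Set Implicit Arguments. Unset Strict Implicit. Unset Printing Implicit Defensive.
Import GRing.Theory Num.Theory.
Local Open Scope ring_scope.

Section Topology.
Variables (T : Type) (open : (T -> Prop) -> Prop).

Definition closed (A : T -> Prop) : Prop := open (fun x => ~ A x).

Definition interior (A : T -> Prop) (x : T) : Prop :=
  exists U, open U /\ U x /\ (forall y, U y -> A y).

Definition closure (A : T -> Prop) (x : T) : Prop :=
  forall U, open U -> U x -> exists y, U y /\ A y.

Definition nowhere_dense (A : T -> Prop) : Prop :=
  forall x, ~ interior (closure A) x.

Definition first_category : Prop :=
  exists N : nat -> (T -> Prop),
    (forall n, nowhere_dense (N n)) /\ (forall x, exists n, N n x).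

Definition is_countable : Prop := exists f : T -> nat, injective f.

Definition hausdorff : Prop :=
  forall x y, x <> y -> exists U V, open U /\ open V /\ U x /\ V y /\
    (forall z, U z -> V z -> False).

Definition compact : Prop :=
  forall (I : Type) (U : I -> T -> Prop),
    (forall i, open (U i)) -> (forall x, exists i, U i x) ->
    exists l : list I, forall x, exists i, In i l /\ U i x.

Definition perfect : Prop := forall x : T, ~ open (fun y => y = x).

Definition connected_set (S : T -> Prop) : Prop :=
  ~ exists U V, open U /\ open V /\
      (forall x, S x -> U x \/ V x) /\
      (exists x, S x /\ U x) /\ (exists x, S x /\ V x) /\
      (forall x, S x -> U x -> V x -> False).

Definition totally_disconnected : Prop :=
  forall S, connected_set S -> forall x y, S x -> S y -> x = y.

Definition neighborhood (x : T) (N : T -> Prop) : Prop := interior N x.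

Definition countable_nbhd_basis (x : T) : Prop :=
  exists B : nat -> (T -> Prop),
    (forall n, neighborhood x (B n)) /\
    (forall N, neighborhood x N -> exists n, forall y, B n y -> N y).

Definition normal_space : Prop :=
  forall A B, closed A -> closed B -> (forall x, A x -> B x -> False) ->
    exists U V, open U /\ open V /\ (forall x, A x -> U x) /\
      (forall x, B x -> V x) /\ (forall x, U x -> V x -> False).

Definition converges (s : nat -> T) (l : T) : Prop :=
  forall U, open U -> U l -> exists N, forall n, (N <= n)%N -> U (s n).

Definition seq_closed (A : T -> Prop) : Prop :=
  forall (s : nat -> T) l, (forall n, A (s n)) -> converges s l -> A l.

Definition sequential : Prop := forall A, seq_closed A <-> closed A.
End Topology.

Definition conf (S : finType) := int -> S.

Definition shift (S : finType) (x : conf S) : conf S := fun i => x (i + 1).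

(* continuity w.r.t. the product (Cantor) topology on S^Z, S discrete:
   each output cell depends only on a finite window of the input *)
Definition cantor_continuous (S : finType) (c : conf S -> conf S) : Prop :=
  forall (x : conf S) (i : int), exists n : nat,
    forall y : conf S, (forall j : int, (absz j <= n)%N -> y j = x j) ->
      c y i = c x i.

Definition is_CA (S : finType) (c : conf S -> conf S) : Prop :=
  cantor_continuous c /\ (forall x, c (shift x) = shift (c x)).

Definition CA (S : finType) := {c : conf S -> conf S | is_CA c}.

Definition U_sub (S : finType) (x : conf S) (a : S) (c : CA S) : Prop :=
  proj1_sig c x 0 = a.

(* topology generated by the subbase: O is open iff every point of O lies
   in a finite intersection of subbasic sets contained in O *)
Definition pw_open (S : finType) (O : CA S -> Prop) : Prop :=
  forall c, O c -> exists l : list (conf S * S),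
    (forall p, In p l -> U_sub p.1 p.2 c) /\
    (forall d, (forall p, In p l -> U_sub p.1 p.2 d) -> O d).

(* A CA c is determined by its local rule  rule c x = c(x)_0  (CA_ext); local
   rules are exactly the functions conf S -> S of finite radius (CA_of_rule,
   and rule_radius, the uniform continuity of a continuous map on the compact
   space S^Z, proved by Koenig's lemma). Hence CA is countable, any values
   prescribed on finitely many configurations are realised by some CA
   (interpolate), and the basic open sets, which fix finitely many rule
   values, are clopen.

   The topological properties are then derived from general facts proved
   first: clopen separation gives Hausdorff and totally disconnected;
   countable + perfect + Hausdorff gives first category; countable and
   zero-dimensional gives normal. Interpolation plus a diagonal argument
   shows that no point has a countable neighbourhood basis (hence perfect);
   interpolating a discontinuous function shows that CA is not compact.
   Finally the CAs detecting a sparse "mark" at some position form a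
   sequentially closed set that is not closed. *)

From Pilot Require Import Defs.
From mathcomp Require Import all_boot all_order all_algebra.
From mathcomp Require Import zify.
From Stdlib Require List.
From Stdlib Require Import Classical ClassicalEpsilon.
From Stdlib Require Import ProofIrrelevance FunctionalExtensionality.
Set Implicit Arguments. Unset Strict Implicit. Unset Printing Implicit Defensive.
Import GRing.Theory.
Local Open Scope ring_scope.

Section ZeroDimensionalSpaces.
Variables (T : Type) (open : (T -> Prop) -> Prop).

Definition clopen (C : T -> Prop) : Prop := open C /\ Defs.closed open C.

Lemma clopen_separated_hausdorff :
  (forall x y, x <> y -> exists C, clopen C /\ C x /\ ~ C y) -> hausdorff open.
Proof.
move=> sep x y /sep [C [[oC cC] [Cx nCy]]].
by exists C, (fun z => ~ C z); do 4!(split => //); move=> z Cz.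
Qed.

Lemma clopen_separated_totally_disconnected :
  (forall x y, x <> y -> exists C, clopen C /\ C x /\ ~ C y) ->
  totally_disconnected open.
Proof.
move=> sep A conA x y Ax Ay; apply: NNPP => /sep [C [[oC cC] [Cx nCy]]].
apply: conA; exists C, (fun z => ~ C z); do 2!(split => //).
split; first by move=> z _; exact: classic.
split; first by exists x.
split; first by exists y.
by move=> z _ Cz.
Qed.

(* An isolated point has the trivial countable neighbourhood basis {x};
   hence a space without countable neighbourhood bases is perfect. *)
Lemma isolated_countable_nbhd_basis (x : T) :
  open (fun y => y = x) -> countable_nbhd_basis open x.
Proof.
move=> ox; exists (fun _ y => y = x); split.
  by move=> _; exists (fun y => y = x); split.
by move=> N [U [_ [Ux sUN]]]; exists 0%N => y ->; exact: sUN.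
Qed.

Hypothesis open_ext :
  forall A B : T -> Prop, (forall x, A x <-> B x) -> open A -> open B.

(* In a perfect Hausdorff space, a set with at most one point is nowhere
   dense: an open set inside its closure would be an open singleton. *)
Lemma subsingleton_nowhere_dense (A : T -> Prop) :
  hausdorff open -> perfect open -> (forall a b, A a -> A b -> a = b) ->
  nowhere_dense open A.
Proof.
move=> hT pT subA x [U [oU [Ux sU]]].
have UA : forall d, U d -> A d.
  move=> d Ud; apply: NNPP => nAd.
  have [e [_ Ae]] := sU d Ud U oU Ud.
  have ne : d <> e by move=> E; apply: nAd; rewrite E.
  have [V [W [oV [oW [Vd [We VW]]]]]] := hT d e ne.
  have [y [Vy Ay]] := sU d Ud V oV Vd.
  by apply: (VW e) We; rewrite -(subA y e Ay Ae).
apply: (pT x); apply: (open_ext _ oU) => y; split => [Uy|->] //.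
exact: subA (UA y Uy) (UA x Ux).
Qed.

(* A countable perfect Hausdorff space is the countable union of its
   (nowhere dense) points. *)
Lemma countable_first_category :
  is_countable T -> hausdorff open -> perfect open -> first_category open.
Proof.
move=> [f injf] hT pT; exists (fun n x => f x = n).
split; last by move=> x; exists (f x).
move=> n; apply: subsingleton_nowhere_dense => // a b fa fb.
by apply: injf; rewrite fa fb.
Qed.

Hypothesis open_setT : open (fun _ => True).
Hypothesis open_setI :
  forall A B : T -> Prop, open A -> open B -> open (fun x => A x /\ B x).
Hypothesis open_bigcup : forall (I : Type) (F : I -> T -> Prop),
  (forall i, open (F i)) -> open (fun x => exists i, F i x).

Lemma clopen_set0 : clopen (fun _ => False).
Proof.
split; last by apply: (open_ext _ open_setT) => x; split => // _ [].
have empty_union := @open_bigcup False (fun (i : False) (_ : T) => True)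
  (fun i => match i with end).
by apply: (open_ext _ empty_union) => x; split => [[[]]|[]].
Qed.

Lemma open_bigcap_le (G : nat -> T -> Prop) (n : nat) :
  (forall k, open (G k)) -> open (fun x => forall k, (k <= n)%N -> G k x).
Proof.
move=> oG; elim: n => [|n IH].
  apply: (open_ext _ (oG 0%N)) => x; split => [G0 k|]; last exact.
  by rewrite leqn0 => /eqP ->.
apply: (open_ext _ (open_setI IH (oG n.+1))) => x.
split => [[Gle Gn] k|Gle]; last by split=> [k kn|]; apply: Gle => //; lia.
by rewrite leq_eqVlt ltnS => /orP[/eqP ->|]; [exact: Gn|exact: Gle].
Qed.

(* The shrinking trick behind "countable regular spaces are normal": if
   A and B are covered by sequences of clopen sets W_n, V_n avoiding the
   other set, then the open sets  U = U_n (W_n \ U_{k<=n} V_k)  and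
   U' = U_n (V_n \ U_{k<=n} W_k)  separate A and B. *)
Lemma separate_by_clopen_covers (A B : T -> Prop) (W V : nat -> T -> Prop) :
  (forall n, clopen (W n)) -> (forall n, clopen (V n)) ->
  (forall x, A x -> exists n, W n x) -> (forall x, B x -> exists n, V n x) ->
  (forall n x, W n x -> ~ B x) -> (forall n x, V n x -> ~ A x) ->
  exists U U', open U /\ open U' /\ (forall x, A x -> U x) /\
    (forall x, B x -> U' x) /\ (forall x, U x -> U' x -> False).
Proof.
move=> cW cV AW BV WB VA.
pose shrink (W V : nat -> T -> Prop) x :=
  exists n, W n x /\ forall k, (k <= n)%N -> ~ V k x.
have open_shrink W' V' : (forall n, clopen (W' n)) -> (forall n, clopen (V' n)) ->
    open (shrink W' V').
  move=> cW' cV'; apply: open_bigcup => n; apply: open_setI; first exact: (cW' n).1.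
  by apply: open_bigcap_le => k; exact: (cV' k).2.
exists (shrink W V), (shrink V W); do 2!(split; first exact: open_shrink).
split.
  move=> x Ax; have [n Wx] := AW x Ax; exists n; split => // k _ Vx.
  exact: VA k x Vx Ax.
split.
  move=> x Bx; have [n Vx] := BV x Bx; exists n; split => // k _ Wx.
  exact: WB k x Wx Bx.
move=> x [n [Wx nV]] [m [Vx nW]]; case: (leqP n m) => nm.
  exact: nW n nm Wx.
exact: nV m (ltnW nm) Vx.
Qed.

Lemma countable_clopen_cover (A B : T -> Prop) :
  is_countable T ->
  (forall x, A x -> exists C, clopen C /\ C x /\ forall y, C y -> ~ B y) ->
  exists W : nat -> T -> Prop, (forall n, clopen (W n)) /\
    (forall x, A x -> exists n, W n x) /\ (forall n x, W n x -> ~ B x).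
Proof.
move=> [f injf] nbhdA.
have cover_preimage n : exists C, (clopen C /\ forall x, C x -> ~ B x) /\
    (forall x, A x -> f x = n -> C x).
  case: (classic (exists a, A a /\ f a = n)) => [[a [Aa fa]]|none].
    have [C [cC [Ca CB]]] := nbhdA a Aa; exists C; split => // x Ax fx.
    by rewrite (injf x a) // fx fa.
  exists (fun _ => False); split; first by split => //; exact: clopen_set0.
  by move=> x Ax fx; apply: none; exists x.
have [W HW] := ClassicalEpsilon.choice _ cover_preimage.
exists W; split; first by move=> n; exact: (HW n).1.1.
split; last by move=> n; exact: (HW n).1.2.
by move=> x Ax; exists (f x); exact: (HW (f x)).2.
Qed.

Lemma countable_zero_dimensional_normal :
  is_countable T ->
  (forall K x, Defs.closed open K -> ~ K x ->
     exists C, clopen C /\ C x /\ forall y, C y -> ~ K y) ->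
  normal_space open.
Proof.
move=> cT zd A B cA cB AB.
have [W [cW [AW WB]]] := countable_clopen_cover cT
  (fun x Ax => zd B x cB (AB x Ax)).
have [V [cV [BV VA]]] := countable_clopen_cover cT
  (fun x Bx => zd A x cA (fun Ax => AB x Ax Bx)).
exact: separate_by_clopen_covers cW cV AW BV WB VA.
Qed.

End ZeroDimensionalSpaces.

Lemma dependent_choice (A : Type) (P : nat -> A -> Prop) (R : nat -> A -> A -> Prop)
    (a0 : A) :
  P 0%N a0 -> (forall n a, P n a -> exists a', R n a a' /\ P n.+1 a') ->
  exists X : nat -> A, forall n, P n (X n) /\ R n (X n) (X n.+1).
Proof.
move=> P0 extend.
have step (na : nat * A) :
    exists a', P na.1 na.2 -> R na.1 na.2 a' /\ P na.1.+1 a'.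
  case: (classic (P na.1 na.2)) => [/extend [a' Ha']|nP]; first by exists a'.
  by exists na.2.
have [next Hnext] := ClassicalEpsilon.choice _ step.
pose fix X n := if n is k.+1 then next (k, X k) else a0.
have PX n : P n (X n) by elim: n => [|n IH] //=; exact: (Hnext (n, X n) IH).2.
by exists X => n; split => //; exact: (Hnext (n, X n) (PX n)).1.
Qed.

Lemma finitely_often_unbounded (g : nat -> nat) :
  (forall n, exists K, forall k, (K <= k)%N -> g k <> n) ->
  forall B, exists K, forall k, (K <= k)%N -> (B < g k)%N.
Proof.
move=> fin; elim=> [|B [K1 HK1]].
  by have [K HK] := fin 0%N; exists K => k /HK; lia.
have [K2 HK2] := fin B.+1; exists (maxn K1 K2) => k Kk.
have := HK1 k ltac:(lia); have := HK2 k ltac:(lia); lia.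
Qed.

Lemma doubling_subsequence (g : nat -> nat) :
  (forall B, exists K, forall k, (K <= k)%N -> (B < g k)%N) ->
  exists ks : nat -> nat, forall j, (j <= ks j)%N /\ ((g (ks j)).*2 < g (ks j.+1))%N.
Proof.
move=> unb.
have step j k : (j <= k)%N ->
    exists k', ((k < k')%N /\ ((g k).*2 < g k')%N) /\ (j.+1 <= k')%N.
  move=> jk; have [K HK] := unb (g k).*2.
  by exists (maxn K k.+1); split; first split; [lia|apply: HK; lia|lia].
have [ks Hks] := dependent_choice (leqnn 0) step.
by exists ks => j; have [jk [_ ?]] := Hks j.
Qed.

Lemma doubling_growth (P : nat -> nat) :
  (forall j, ((P j).*2 < P j.+1)%N) -> forall j j', (j < j')%N -> ((P j).*2 < P j')%N.
Proof.
move=> dbl j; elim=> [|j' IH] //; rewrite ltnS leq_eqVlt => /orP[/eqP <-|jj'].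
  exact: dbl.
by have := IH jj'; have := dbl j'; lia.
Qed.

Section LocalRules.
Variable S : finType.
Implicit Types (c d : CA S) (x y z : conf S).

Definition rule c x : S := proj1_sig c x 0.

Definition agree (n : nat) x y : Prop :=
  forall j : int, (absz j < n)%N -> x j = y j.

Lemma agree_le m n x y : (m <= n)%N -> agree n x y -> agree m x y.
Proof. by move=> mn xy j jm; apply: xy; exact: leq_trans mn. Qed.

Lemma agree_sym n x y : agree n x y -> agree n y x.
Proof. by move=> xy j jn; rewrite xy. Qed.

Lemma agree_trans n x y z : agree n x y -> agree n y z -> agree n x z.
Proof. by move=> xy yz j jn; rewrite xy // yz. Qed.

Lemma rule_continuous c x :
  exists n, forall y, agree n x y -> rule c y = rule c x.
Proof.
have [n Hn] := (proj2_sig c).1 x 0; exists n.+1 => y xy.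
by apply: Hn => j jn; rewrite xy.
Qed.

Definition translate (i : int) x : conf S := fun j => x (j + i).

Lemma CA_translate_nat c (n : nat) x :
  proj1_sig c (translate n x) = translate n (proj1_sig c x).
Proof.
have translateS k y : translate k.+1 y = shift (translate k y).
  by apply: functional_extensionality => j; rewrite /translate /shift; congr y; lia.
have translate0 y : translate 0 y = y.
  by apply: functional_extensionality => j; rewrite /translate addr0.
elim: n => [|n IH]; first by rewrite !translate0.
by rewrite translateS (proj2_sig c).2 IH -translateS.
Qed.

Lemma CA_translate c (i : int) x : rule c (translate i x) = proj1_sig c x i.
Proof.
case: i => [n|n]; first by rewrite /rule CA_translate_nat /translate add0r.
have back : translate n.+1 (translate (Negz n) x) = x.
  by apply: functional_extensionality => j; rewrite /translate; congr x; lia.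
rewrite -[in RHS]back CA_translate_nat /rule /translate; congr (proj1_sig c _); lia.
Qed.

Lemma CA_ext c d : (forall x, rule c x = rule d x) -> c = d.
Proof.
move=> cd.
have E : proj1_sig c = proj1_sig d.
  apply: functional_extensionality => x; apply: functional_extensionality => i.
  by rewrite -!CA_translate cd.
case: c d E {cd} => [c Hc] [d Hd] /= E; subst d.
by rewrite (proof_irrelevance _ Hc Hd).
Qed.

Lemma CA_neq c d : c <> d -> exists x, rule c x <> rule d x.
Proof.
move=> cd; apply: NNPP => same; apply: cd; apply: CA_ext => x.
by apply: NNPP => ne; apply: same; exists x.
Qed.

Definition has_radius (R : nat) (f : conf S -> S) : Prop :=
  forall x y, agree R x y -> f x = f y.

Lemma CA_of_rule R f : has_radius R f -> exists c, forall x, rule c x = f x.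
Proof.
move=> fR.
have HCA : is_CA (fun x (i : int) => f (translate i x)).
  split.
    move=> x i; exists (R + absz i)%N => y xy.
    apply: fR => j jR; rewrite /translate; apply: xy; lia.
  move=> x; apply: functional_extensionality => i; rewrite /shift; congr f.
  by apply: functional_extensionality => j; rewrite /translate /shift; congr x; lia.
exists (exist _ _ HCA) => x; rewrite /rule /=; congr f.
by apply: functional_extensionality => j; rewrite /translate addr0.
Qed.

Lemma window_separates_point a (xs : list (conf S)) :
  exists R, forall y, List.In y xs -> agree R a y -> a = y.
Proof.
elim: xs => [|b xs [R sepa]]; first by exists 0%N.
case: (classic (a = b)) => [<-|ab].
  by exists R => y [<-|/sepa] // /[apply].
have [j abj] : exists j, a j <> b j.
  apply: not_all_ex_not => same; apply: ab; exact: functional_extensionality.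
exists (maxn R (absz j).+1) => y [<-|/sepa yin] ay.
  by case: abj; apply: ay; lia.
by apply: yin; apply: agree_le ay; exact: leq_maxl.
Qed.

Lemma window_separates (xs : list (conf S)) :
  exists R, forall x y, List.In x xs -> List.In y xs -> agree R x y -> x = y.
Proof.
elim: xs => [|a xs [R sepR]]; first by exists 0%N.
have [Ra sepa] := window_separates_point a xs.
exists (maxn R Ra) => x y [<-|xin] [<-|yin] xy //.
- by apply: sepa => //; apply: agree_le xy; exact: leq_maxr.
- by symmetry; apply: sepa => //; apply: agree_sym; apply: agree_le xy; exact: leq_maxr.
- by apply: sepR => //; apply: agree_le xy; exact: leq_maxl.
Qed.

Fixpoint first_match (dflt : S) (R : nat) (h : conf S -> S)
    (xs : list (conf S)) (y : conf S) : S :=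
  if xs is a :: xs' then
    if excluded_middle_informative (agree R y a) is left _ then h a
    else first_match dflt R h xs' y
  else dflt.

Lemma first_match_radius dflt R h xs : has_radius R (first_match dflt R h xs).
Proof.
move=> y y' yy'; elim: xs => [|a xs IH] //=.
case: excluded_middle_informative => ya; case: excluded_middle_informative => y'a //.
- by case: y'a; apply: agree_trans ya; exact: agree_sym.
- by case: ya; exact: agree_trans y'a.
Qed.

Lemma first_match_spec dflt R h xs :
  (forall x y, List.In x xs -> List.In y xs -> agree R x y -> x = y) ->
  forall x, List.In x xs -> first_match dflt R h xs x = h x.
Proof.
elim: xs => [|a xs IH] sepR x //= xin.
case: excluded_middle_informative => xa.
  by rewrite [in h x](sepR x a xin (or_introl erefl) xa).
case: xin => [ax|xin]; first by case: xa; rewrite ax.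
by apply: IH => // u v uin vin; apply: sepR; right.
Qed.

Lemma interpolate (dflt : S) (h : conf S -> S) (xs : list (conf S)) :
  exists c, forall x, List.In x xs -> rule c x = h x.
Proof.
have [R sepR] := window_separates xs.
have [c Hc] := CA_of_rule (@first_match_radius dflt R h xs).
by exists c => x xin; rewrite Hc; exact: first_match_spec.
Qed.

(* Uniform continuity of local rules (compactness of S^Z, via Koenig's
   lemma). [oscillates c m y]: two configurations agreeing with y on the
   m-window have different images; [wild c n x]: oscillation at every scale
   occurs arbitrarily close to x, up to the n-window. *)
Definition oscillates c (m : nat) y : Prop :=
  exists y1 y2, agree m y y1 /\ agree m y y2 /\ rule c y1 <> rule c y2.

Definition wild c (n : nat) x : Prop :=
  forall m, exists y, agree n x y /\ oscillates c m y.

Lemma oscillates_le c m m' y : (m <= m')%N -> oscillates c m' y -> oscillates c m y.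
Proof.
move=> mm' [y1 [y2 [yy1 [yy2 ne]]]]; exists y1, y2.
by split; [|split] => //; exact: agree_le mm' _.
Qed.

Definition patch (n : nat) (p : S * S) x : conf S :=
  fun j => if j == n%:Z then p.1 else if j == - n%:Z then p.2 else x j.

Lemma agree_patch n x y :
  agree n x y -> agree n.+1 (patch n (y n, y (- n%:Z)) x) y.
Proof.
move=> xy j jn; rewrite /patch /=.
case: eqP => [->|jn1] //; case: eqP => [->|jn2] //; apply: xy; lia.
Qed.

(* Koenig step: finitely many choices for the two new boundary cells, so
   one of them keeps the point wild. *)
Lemma wild_extend c n x :
  wild c n x -> exists x', agree n x x' /\ wild c n.+1 x'.
Proof.
move=> wx; apply: NNPP => stuck.
have tame p : exists m, forall y, agree n.+1 (patch n p x) y -> ~ oscillates c m y.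
  apply: NNPP => wp; apply: stuck; exists (patch n p x); split.
    move=> j jn; rewrite /patch.
    by case: eqP => [jn1|_]; [lia|case: eqP => [jn2|_] //; lia].
  move=> m; apply: NNPP => nm; apply: wp; exists m => y py oy.
  by apply: nm; exists y.
have [m Hm] := ClassicalEpsilon.choice _ tame.
have [y [xy oy]] := wx (\max_p m p).
apply: (Hm (y n, y (- n%:Z)) y (agree_patch xy)).
by apply: oscillates_le oy; exact: leq_bigmax.
Qed.

Lemma window_limit (X : nat -> conf S) :
  (forall n, agree n (X n) (X n.+1)) -> exists z, forall n, agree n z (X n).
Proof.
move=> XS.
have Xle k m : (k <= m)%N -> agree k (X k) (X m).
  elim: m => [|m IH] km; first by move: km; rewrite leqn0 => /eqP ->.
  case: (leqP k m) => [km'|mk]; last by have -> : k = m.+1 by lia.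
  exact: agree_trans (IH km') (agree_le km' (XS m)).
exists (fun j => X (absz j).+1 j) => n j jn.
by apply: (Xle (absz j).+1 n) => //; exact: ltnSn.
Qed.

Lemma rule_radius c : exists R, has_radius R (rule c).
Proof.
apply: NNPP => noR.
have osc m : exists y, oscillates c m y.
  have : ~ has_radius m (rule c) by move=> Rm; apply: noR; exists m.
  move=> /not_all_ex_not [y] /not_all_ex_not [y'] ne.
  have [yy' rne] := imply_to_and _ _ ne.
  by exists y, y, y'.
have [x0 _] := osc 0%N.
have wild0 : wild c 0 x0 by move=> m; have [y oy] := osc m; exists y.
have [X HX] := dependent_choice wild0 (@wild_extend c).
have [z Xz] := window_limit (fun n => (HX n).2).
have [N HN] := rule_continuous c z.
have [y [Xy [y1 [y2 [yy1 [yy2 ne]]]]]] := (HX N).1 N.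
have zN : agree N z y := agree_trans (Xz N) Xy.
by apply: ne; rewrite (HN y1) ?(HN y2) //; apply: agree_trans zN _.
Qed.

(* Countability: a CA is coded by a radius R and the finite table of its
   rule on the (2R+1)-cell windows. *)
Definition window_code (R : nat) x : {ffun 'I_(R.*2).+1 -> S} :=
  [ffun k : 'I_(R.*2).+1 => x ((k : nat)%:Z - R%:Z)].

Definition window_decode (R : nat) (p : {ffun 'I_(R.*2).+1 -> S}) : conf S :=
  fun j => p (inord (absz (j + R%:Z))).

Lemma window_decode_code R x : agree R x (window_decode (window_code R x)).
Proof.
move=> j jR; rewrite /window_decode /window_code ffunE inordK; last by lia.
congr x; lia.
Qed.

Definition radius c : nat :=
  proj1_sig (constructive_indefinite_description _ (rule_radius c)).

Lemma radiusP c : has_radius (radius c) (rule c).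
Proof. exact: proj2_sig (constructive_indefinite_description _ (rule_radius c)). Qed.

Definition CA_code c : nat * seq S :=
  (radius c, [seq rule c (window_decode p)
               | p <- enum {: {ffun 'I_((radius c).*2).+1 -> S}}]).

Lemma CA_code_inj : injective CA_code.
Proof.
move=> c d [Rcd]; have Rc := @radiusP c; rewrite Rcd in Rc *.
move=> /eq_in_map tab; apply: CA_ext => x.
rewrite (Rc _ _ (@window_decode_code (radius d) x)).
rewrite (radiusP (@window_decode_code (radius d) x)).
by apply: tab; rewrite mem_enum.
Qed.

Lemma CA_countable : is_countable (CA S).
Proof.
exists (fun c => pickle (CA_code c)) => c d cd.
by apply: CA_code_inj; exact: (pcan_inj pickleK) cd.
Qed.

End LocalRules.

Section PointwiseTopology.
Variable S : finType.
Implicit Types (c d : CA S) (x y z : conf S).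

Local Notation open := (@pw_open S).

Definition basic (l : list (conf S * S)) c : Prop :=
  forall p, List.In p l -> rule c p.1 = p.2.

Lemma basic1 x a d : basic [:: (x, a)] d <-> rule d x = a.
Proof.
split => [xd|dx p]; first exact: (xd (x, a) (or_introl erefl)).
by case=> [E|[]]; subst p.
Qed.

Lemma pw_open_ext (A B : CA S -> Prop) :
  (forall c, A c <-> B c) -> open A -> open B.
Proof.
move=> AB oA c /AB Ac; have [l [lc lA]] := oA c Ac.
by exists l; split => // d ld; apply/AB; exact: lA.
Qed.

Lemma pw_open_setT : open (fun _ => True).
Proof. by move=> c _; exists nil. Qed.

Lemma pw_open_setI (A B : CA S -> Prop) :
  open A -> open B -> open (fun c => A c /\ B c).
Proof.
move=> oA oB c [Ac Bc].
have [l1 [l1c l1A]] := oA c Ac; have [l2 [l2c l2B]] := oB c Bc.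
exists (l1 ++ l2); split.
  by move=> p pl; case: (List.in_app_or _ _ _ pl); [exact: l1c|exact: l2c].
by move=> d ld; split; [apply: l1A|apply: l2B] => p ?; apply: ld;
  apply: List.in_or_app; [left|right].
Qed.

Lemma pw_open_bigcup (I : Type) (F : I -> CA S -> Prop) :
  (forall i, open (F i)) -> open (fun c => exists i, F i c).
Proof.
move=> oF c [i Fc]; have [l [lc lF]] := oF i c Fc.
by exists l; split => // d ld; exists i; exact: lF.
Qed.

(* Basic open sets are clopen: a CA outside basic l violates one of its
   finitely many constraints, and that violation is an open condition. *)
Lemma basic_clopen l : clopen open (basic l).
Proof.
split; first by move=> c lc; exists l.
move=> c /not_all_ex_not [p nlp]; have [pl pc] := imply_to_and _ _ nlp.
exists [:: (p.1, rule c p.1)]; split; first exact/basic1.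
by move=> d /basic1 dc ld; apply: pc; rewrite -dc; exact: ld.
Qed.

Lemma CA_clopen_separated c d :
  c <> d -> exists C, clopen open C /\ C c /\ ~ C d.
Proof.
move=> /CA_neq [x cd]; exists (basic [:: (x, rule c x)]).
split; first exact: basic_clopen.
by split; [apply/basic1|move=> /basic1 dx; apply: cd].
Qed.

Lemma CA_zero_dimensional K c :
  Defs.closed open K -> ~ K c ->
  exists C, clopen open C /\ C c /\ forall d, C d -> ~ K d.
Proof.
move=> cK Kc; have [l [lc lK]] := cK c Kc.
by exists (basic l); split; [exact: basic_clopen|split => // d /lK].
Qed.

Lemma converges_rule (s : nat -> CA S) l :
  converges open s l ->
  forall x, exists N, forall k, (N <= k)%N -> rule (s k) x = rule l x.
Proof.
move=> sl x; have lx : basic [:: (x, rule l x)] l by exact/basic1.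
have [N HN] := sl _ (basic_clopen _).1 lx.
by exists N => k Nk; apply/basic1; exact: HN.
Qed.

Section TwoLetters.
Variables (a0 a1 : S).
Hypothesis a01 : a0 != a1.

Lemma a0_neq_a1 : a0 <> a1.
Proof. exact/eqP. Qed.

Definition flip (a : S) : S := if a == a0 then a1 else a0.

Lemma flip_neq a : flip a <> a.
Proof.
rewrite /flip; case: eqP => [->|ne] E; last exact: ne.
exact: a0_neq_a1 (esym E).
Qed.

Lemma escape c l z b :
  basic l c -> ~ List.In z (List.map fst l) ->
  exists d, basic l d /\ rule d z = b.
Proof.
move=> lc zl.
pose h y := if excluded_middle_informative (y = z) is left _ then b else rule c y.
have [d dh] := interpolate b h (z :: List.map fst l).
exists d; split; last first.
  by rewrite dh /h; [case: excluded_middle_informative|left].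
move=> p pl; rewrite dh /h; last by right; exact: List.in_map.
case: excluded_middle_informative => [pz|_]; last exact: lc.
by case: zl; rewrite -pz; exact: List.in_map.
Qed.

(* Cantor's diagonal argument: a configuration outside countably many
   finite lists, differing from the k-th entry of the n-th list at the
   cell coding (n, k). *)
Lemma avoid_countably_many (L : nat -> list (conf S)) :
  exists z, forall n, ~ List.In z (L n).
Proof.
pose z (j : int) : S :=
  if (0 <= j)%R then
    if unpickle (absz j) is Some (n, k) then flip (List.nth k (L n) (fun _ => a0) j)
    else a0
  else a0.
exists z => n /(List.In_nth _ _ (fun _ => a0)) [k [_ Lnk]].
have := congr1 (fun x : conf S => x (pickle (n, k))%:Z) Lnk.
by rewrite /z /= pickleK => E; exact: flip_neq (esym E).
Qed.

(* No CA has a countable neighbourhood basis: diagonalise against the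
   configurations constrained by countably many basic neighbourhoods. *)
Lemma CA_no_countable_nbhd_basis c : ~ countable_nbhd_basis open c.
Proof.
move=> [B [nbB baseB]].
have basic_inside n : exists l, basic l c /\ forall d, basic l d -> B n d.
  have [U [oU [Uc UB]]] := nbB n; have [l [lc lU]] := oU c Uc.
  by exists l; split => // d /lU; exact: UB.
have [L HL] := ClassicalEpsilon.choice _ basic_inside.
have [z zL] := avoid_countably_many (fun n => List.map fst (L n)).
have nbz : neighborhood open c (basic [:: (z, rule c z)]).
  exists (basic [:: (z, rule c z)]); split; first exact: (basic_clopen _).1.
  by split => //; exact/basic1.
have [n Bnz] := baseB _ nbz.
have [d [Lnd dz]] := escape (flip (rule c z)) (HL n).1 (zL n).
have /basic1 := Bnz d ((HL n).2 d Lnd); rewrite dz; exact: flip_neq.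
Qed.

Lemma CA_perfect : perfect open.
Proof.
move=> c oc; apply: (@CA_no_countable_nbhd_basis c).
exact: isolated_countable_nbhd_basis.
Qed.

(* The indicator of the all-a0 configuration is discontinuous, so it is
   the rule of no CA. *)
Definition point_indicator (x : conf S) : S :=
  if excluded_middle_informative (x = fun _ => a0) is left _ then a1 else a0.

Lemma point_indicator_not_rule c : exists x, rule c x <> point_indicator x.
Proof.
apply: NNPP => all_eq.
have rc x : rule c x = point_indicator x by apply: NNPP => ne; apply: all_eq; exists x.
have [N HN] := rule_continuous c (fun _ => a0).
pose y (j : int) := if (absz j < N)%N then a0 else a1.
have yne : y <> (fun _ => a0).
  move=> /(congr1 (fun x : conf S => x N%:Z)); rewrite /y /= ltnn => E.
  exact: a0_neq_a1 (esym E).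
have x0y : agree N (fun _ => a0) y by move=> j jN; rewrite /y jN.
have iy : point_indicator y = a0.
  by rewrite /point_indicator; case: excluded_middle_informative.
have i0 : point_indicator (fun _ => a0) = a1.
  by rewrite /point_indicator; case: excluded_middle_informative.
by move: (HN y x0y); rewrite !rc iy i0; exact: a0_neq_a1.
Qed.

(* Not compact: the open sets {c | rule c x <> point_indicator x} cover
   CA, but by interpolation no finite subfamily does. *)
Lemma CA_not_compact : ~ compact open.
Proof.
move=> cpt.
have open_miss x : open (fun c => rule c x <> point_indicator x).
  apply: pw_open_ext (basic_clopen [:: (x, point_indicator x)]).2 => c.
  by split => [ne /basic1|/basic1].
have [xs cover] := cpt _ _ open_miss point_indicator_not_rule.
have [d dxs] := interpolate a0 point_indicator xs.
have [x [xin dx]] := cover d.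
exact: dx (dxs x xin).
Qed.

(* Not sequential. The witness is the set of CAs detecting a "mark" at
   position n: x is marked at n if x_n = a1 and x_j = a0 for n < j <= 2n. *)
Definition marked (n : nat) x : bool :=
  (x n%:Z == a1) && all (fun j : nat => x j%:Z == a0) (iota n.+1 n).

Lemma marked_sparse n m x :
  marked n x -> marked m x -> (n < m)%N -> (n.*2 < m)%N.
Proof.
move=> /andP [_ /allP after] /andP [/eqP xm _] nm; rewrite ltnNge; apply/negP => mn.
have : m \in iota n.+1 n by rewrite mem_iota; lia.
by move=> /after; rewrite xm => /eqP a10; exact: a0_neq_a1 (esym a10).
Qed.

Lemma marked_single n : marked n (fun j => if j == n%:Z then a1 else a0).
Proof.
apply/andP; split; first by rewrite eqxx.
apply/allP => j; rewrite mem_iota => jn.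
by have -> : (j%:Z == n%:Z) = false by apply/eqP; lia.
Qed.

Definition mark_rule (n : nat) x : S := if marked n x then a1 else a0.

Lemma mark_rule_radius n : has_radius (n.*2).+1 (mark_rule n).
Proof.
move=> x y xy; rewrite /mark_rule /marked xy; last by lia.
congr (if _ && _ then _ else _); apply: eq_in_all => j; rewrite mem_iota => jn.
by rewrite xy //; lia.
Qed.

Definition mark_detector d : Prop := exists n, forall x, rule d x = mark_rule n x.

(* Finitely many configurations cannot be marked everywhere: among the L+1
   positions L+1, ..., 2L+1 each of the L configurations is marked at most
   once, by sparseness. *)
Lemma avoid_marks (xs : list (conf S)) :
  exists n, forall x, List.In x xs -> ~~ marked n x.
Proof.
apply: NNPP => all_marked; pose L := length xs.
have hit n : exists k, (k < L)%N /\ marked n (List.nth k xs (fun _ => a0)).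
  apply: NNPP => nohit; apply: all_marked; exists n => x.
  move=> /(List.In_nth _ _ (fun _ => a0)).
  move=> [k [/ltP kL xk]]; apply/negP => nx; apply: nohit; exists k.
  by rewrite xk.
have [g Hg] := ClassicalEpsilon.choice _ hit.
have g_inj : {in iota L.+1 L.+1 &, injective g}.
  move=> n m; rewrite !mem_iota => nL mL gnm.
  have := (Hg n).2; have := (Hg m).2; rewrite gnm => mm nn.
  case: (ltngtP n m) => // [nm|mn].
    by have := marked_sparse nn mm nm; lia.
  by have := marked_sparse mm nn mn; lia.
have := uniq_leq_size (s1 := map g (iota L.+1 L.+1)) (s2 := iota 0 L).
rewrite (map_inj_in_uniq g_inj) iota_uniq size_map !size_iota ltnn => contra.
suff : false by []; apply: contra => // k /mapP [n _ ->].
by rewrite mem_iota add0n; exact: (Hg n).1.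
Qed.

Lemma mark_detectors_not_closed : ~ Defs.closed open mark_detector.
Proof.
move=> cl.
have [c0 c0a0] := @CA_of_rule S 0 (fun _ => a0) (fun _ _ _ => erefl).
have c0out : ~ mark_detector c0.
  move=> [n Hn]; have := Hn (fun j => if j == n%:Z then a1 else a0).
  by rewrite c0a0 /mark_rule marked_single; exact: a0_neq_a1.
have [l [lc0 ldet]] := cl c0 c0out.
have [n nl] := avoid_marks (List.map fst l).
have [d dn] := CA_of_rule (@mark_rule_radius n).
apply: (ldet d); last by exists n.
move=> p pl; have c0p : rule c0 p.1 = p.2 := lc0 p pl.
rewrite /U_sub -/(rule d p.1) dn /mark_rule (negbTE (nl _ (List.in_map _ _ _ pl))).
by rewrite -c0p c0a0.
Qed.

Definition sparse (Q : nat -> Prop) : Prop :=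
  forall n m, Q n -> Q m -> (n < m)%N -> (n.*2 < m)%N.

Definition indicator (Q : nat -> Prop) : conf S :=
  fun j => if excluded_middle_informative (exists n, Q n /\ j = n%:Z) is left _
            then a1 else a0.

Lemma marked_indicator Q n : sparse Q -> marked n (indicator Q) <-> Q n.
Proof.
move=> sQ; split.
  move=> /andP [xn _]; move: xn; rewrite /indicator.
  case: excluded_middle_informative => [[m [Qm [->]]] //|_].
  by move/eqP => /a0_neq_a1.
move=> Qn; apply/andP; split.
  by rewrite /indicator; case: excluded_middle_informative => // [[]]; exists n.
apply/allP => j; rewrite mem_iota => jn; rewrite /indicator.
case: excluded_middle_informative => // [[m [Qm [jm]]]]; subst m.
by have := sQ n j Qn Qm ltac:(lia); lia.
Qed.

(* Detectors of marks at unbounded positions do not converge: along a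
   doubling subsequence, the indicator of the even-indexed positions is seen
   alternately as marked and unmarked, so its rule values oscillate. *)
Lemma unbounded_mark_detectors_diverge (s : nat -> CA S) (pos : nat -> nat) l :
  (forall k x, rule (s k) x = mark_rule (pos k) x) ->
  (forall B, exists K, forall k, (K <= k)%N -> (B < pos k)%N) ->
  ~ converges open s l.
Proof.
move=> Hpos unb sl.
have [ks Hks] := doubling_subsequence unb.
pose P j := pos (ks j).
have growP := doubling_growth (fun j => (Hks j).2 : ((P j).*2 < P j.+1)%N).
pose Q n := exists j, n = P j.*2.
have sQ : sparse Q.
  move=> _ _ [j ->] [j' ->] lt; case: (ltngtP j.*2 j'.*2) => [jj|jj|jj].
  - exact: growP.
  - by have := growP _ _ jj; lia.
  - by move: lt; rewrite jj ltnn.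
have even j : rule (s (ks j.*2)) (indicator Q) = a1.
  by rewrite Hpos /mark_rule (proj2 (marked_indicator _ sQ)) //; exists j.
have odd j : rule (s (ks j.*2.+1)) (indicator Q) = a0.
  rewrite Hpos /mark_rule; case: ifP => // /(marked_indicator _ sQ) [j' E]; exfalso.
  case: (ltngtP j'.*2 j.*2.+1) => jj; last lia.
    by have := growP _ _ jj; rewrite /P in E *; lia.
  by have := growP _ _ jj; rewrite /P in E *; lia.
have [N HN] := converges_rule sl (indicator Q).
have := HN (ks N.*2.+1) ltac:(have := (Hks N.*2.+1).1; lia).
by rewrite -(HN (ks N.*2) ltac:(have := (Hks N.*2).1; lia)) even odd => /a0_neq_a1.
Qed.

(* Mark detectors form a sequentially closed set: along a convergent
   sequence the detected positions cannot be unbounded, so some position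
   recurs infinitely often, and the limit detects it. *)
Lemma mark_detectors_seq_closed : seq_closed open mark_detector.
Proof.
move=> s l sdet sl.
have [pos Hpos] := ClassicalEpsilon.choice _ sdet.
pose recurs n := forall K, exists k, (K <= k)%N /\ pos k = n.
have [[n rec]|norec] := classic (exists n, recurs n).
  exists n => x; have [N HN] := converges_rule sl x; have [k [Nk kn]] := rec N.
  by rewrite -(HN k Nk) Hpos kn.
have fin n : exists K, forall k, (K <= k)%N -> pos k <> n.
  apply: NNPP => inf; apply: norec; exists n => K; apply: NNPP => none; apply: inf.
  by exists K => k Kk kn; apply: none; exists k.
by case: (unbounded_mark_detectors_diverge Hpos (finitely_often_unbounded fin) sl).
Qed.

Lemma CA_not_sequential : ~ sequential open.
Proof.
move=> seqT; apply: mark_detectors_not_closed.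
by apply/seqT; exact: mark_detectors_seq_closed.
Qed.

End TwoLetters.
End PointwiseTopology.

Theorem theorem3p4 (Sigma : finType) (hS : (1 < #|Sigma|)%N) :
  let op := @pw_open Sigma in
  is_countable (CA Sigma) /\
  hausdorff op /\
  ~ compact op /\
  perfect op /\
  totally_disconnected op /\
  first_category op /\
  (forall c : CA Sigma, ~ countable_nbhd_basis op c) /\
  normal_space op /\
  ~ sequential op.
Proof.
move=> op; have /card_gt1P [a0 [a1 [_ _ a01]]] := hS.
have separated := @CA_clopen_separated Sigma.
have hausdorffCA := clopen_separated_hausdorff separated.
have perfectCA := CA_perfect a01.
split; first exact: CA_countable.
split; first exact: hausdorffCA.
split; first exact: CA_not_compact a01.
split; first exact: perfectCA.
split; first exact: clopen_separated_totally_disconnected separated.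
split; first exact: countable_first_category (@pw_open_ext Sigma)
  (@CA_countable Sigma) hausdorffCA perfectCA.
split; first exact: CA_no_countable_nbhd_basis a01.
split; last exact: CA_not_sequential a01.
exact: countable_zero_dimensional_normal (@pw_open_ext Sigma) (@pw_open_setT Sigma)
  (@pw_open_setI Sigma) (@pw_open_bigcup Sigma) (@CA_countable Sigma)
  (@CA_zero_dimensional Sigma).
Qed.
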